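(* Let $p$ have a habit formation logit representation $(v,c)$ and let $x\in X\setminus\{o\}$. The standard logit estimator $\hat v(x)=\log\left(\frac{p(x,\{x,o\})}{p(o,\{x,o\})}\right)$ is unbiased, i.e. $\hat v(x)=v(x)$, if and only if $c(x)=0$.
   Context: $X$ is a finite set containing an outside option $o$; choice sets are subsets of $X$ containing $o$. Given $v:X\to\mathbb{R}$ and $c:X\to\mathbb{R}_{\ge0}$ with $v(o)=c(o)=0$, for each choice set $A$ define the Markov chain on $A$ with transition probabilities from $y$ to $x$ equal to $\frac{e^{v(x)+c(x)\mathbf{1}\{x=y\}}}{\sum_{z\in A}e^{v(z)+c(z)\mathbf{1}\{z=y\}}}$. A random choice rule $p$ has a habit formation logit representation $(v,c)$ if for each choice set $A$, $p(\cdot,A)$ is the stationary distribution of this chain. *)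

From mathcomp Require Import all_boot all_order all_algebra.
From mathcomp Require Import all_classical all_reals all_analysis.
Set Implicit Arguments. Unset Strict Implicit. Unset Printing Implicit Defensive.
Import Order.TTheory GRing.Theory Num.Theory.
Local Open Scope ring_scope.

Definition choice_set (X : finType) (o : X) (A : {set X}) : Prop := o \in A.

Definition hf_trans (R : realType) (X : finType) (v c : X -> R) (A : {set X})
  (y x : X) : R :=
  expR (v x + c x * (x == y)%:R) /
  \sum_(z in A) expR (v z + c z * (z == y)%:R).

Definition is_stationary (R : realType) (X : finType) (v c : X -> R)
  (A : {set X}) (pi : X -> R) : Prop :=
  [/\ forall x, x \in A -> 0 <= pi x,
      forall x, x \notin A -> pi x = 0,
      \sum_(x in A) pi x = 1 &
      forall x, x \in A -> pi x = \sum_(y in A) pi y * hf_trans v c A y x].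

Definition hf_logit_rep (R : realType) (X : finType) (o : X)
  (p : X -> {set X} -> R) (v c : X -> R) : Prop :=
  [/\ v o = 0, c o = 0, (forall x, 0 <= c x) &
      forall A : {set X}, choice_set o A -> is_stationary v c A (fun x => p x A)].

From mathcomp Require Import all_boot all_order all_algebra.
From mathcomp Require Import all_classical all_reals all_analysis.
From mathcomp Require Import ring lra.
Set Implicit Arguments. Unset Strict Implicit. Unset Printing Implicit Defensive.
Import Order.TTheory GRing.Theory Num.Theory.
Local Open Scope ring_scope.

(* On the choice set {x, o} the habit chain has two states, so stationarity
   reduces to the balance p(x) P(x -> o) = p(o) P(o -> x).  With
   v(o) = c(o) = 0 this gives the odds
     p(x) / p(o) = e^v(x) (1 + e^(v(x) + c(x))) / (1 + e^v(x)),
   so the logit estimator equals v(x) plus the habit correction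
   log ((1 + e^(v(x) + c(x))) / (1 + e^v(x))), which vanishes exactly when
   c(x) = 0 because exp is injective. *)

Lemma big_set2 (T : Type) (idx : T) (op : Monoid.com_law idx) (I : finType)
    (a b : I) (F : I -> T) :
  a != b -> \big[op/idx]_(i in [set a; b]) F i = op (F a) (F b).
Proof. by move=> neq_ab; rewrite big_setU1 ?inE //= big_set1. Qed.

Lemma choice_set2 (X : finType) (o x : X) : choice_set o [set x; o].
Proof. by rewrite /choice_set !inE eqxx orbT. Qed.

Section HabitChain.
Variables (R : realType) (X : finType) (v c : X -> R).

Lemma sum_hf_trans (A : {set X}) (y : X) :
  y \in A -> \sum_(x in A) hf_trans v c A y x = 1.
Proof.
move=> yA; rewrite /hf_trans -mulr_suml mulfV // gt_eqF //.
by rewrite (bigD1 y) //= ltr_pwDl ?expR_gt0 // sumr_ge0.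
Qed.

Lemma stationary_set2_balance (o x : X) (pi : X -> R) :
  x != o -> is_stationary v c [set x; o] pi ->
  pi x * hf_trans v c [set x; o] x o = pi o * hf_trans v c [set x; o] o x.
Proof.
move=> xo [_ _ _ invariant].
have xA : x \in [set x; o] by rewrite !inE eqxx.
have := invariant x xA; have := sum_hf_trans xA; rewrite !big_set2 //=.
set Pxx := hf_trans _ _ _ x x; set Pxo := hf_trans _ _ _ x o.
move=> row_sum pi_x; have -> : Pxo = 1 - Pxx by lra.
by rewrite mulrBr mulr1 {1}pi_x addrAC subrr add0r.
Qed.

Section OutsideOption.
Variables (o x : X).
Hypotheses (vo : v o = 0) (co : c o = 0) (xo : x != o).

Lemma hf_trans_set2_to_outside :
  hf_trans v c [set x; o] x o = (1 + expR (v x + c x))^-1.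
Proof.
rewrite /hf_trans big_set2 //= eqxx eq_sym (negbTE xo) vo co.
by rewrite !(mulr0, mul0r, mulr1, addr0, expR0) mul1r addrC.
Qed.

Lemma hf_trans_set2_from_outside :
  hf_trans v c [set x; o] o x = expR (v x) / (1 + expR (v x)).
Proof.
rewrite /hf_trans big_set2 //= eqxx (negbTE xo) vo co.
by rewrite !(mulr0, mul0r, addr0, expR0) addrC.
Qed.

Lemma stationary_set2_odds (pi : X -> R) :
  is_stationary v c [set x; o] pi ->
  pi x / pi o = expR (v x) * ((1 + expR (v x + c x)) / (1 + expR (v x))).
Proof.
move=> st; have balance := stationary_set2_balance xo st.
have [_ _ sum1 _] := st; rewrite big_set2 //= in sum1.
move: balance; rewrite hf_trans_set2_to_outside hf_trans_set2_from_outside.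
have Dx_gt0 : 0 < 1 + expR (v x + c x) by rewrite ltr_wpDl ?expR_gt0.
have Do_gt0 : 0 < 1 + expR (v x) by rewrite ltr_wpDl ?expR_gt0.
move=> balance; have pio_neq0 : pi o != 0.
  apply/eqP=> pio0; move: balance; rewrite pio0 mul0r => /eqP.
  by rewrite mulf_eq0 invr_eq0 (gt_eqF Dx_gt0) orbF => /eqP pix0; lra.
have -> : pi x = pi o * (expR (v x) / (1 + expR (v x))) * (1 + expR (v x + c x)).
  by rewrite -balance mulrVK // unitfE gt_eqF.
by field; rewrite pio_neq0 !gt_eqF.
Qed.

End OutsideOption.
End HabitChain.

Lemma ln_habit_correction_eq0 (R : realType) (u d : R) :
  ln ((1 + expR (u + d)) / (1 + expR u)) = 0 <-> d = 0.
Proof.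
have a_neq0 : 1 + expR u != 0 by rewrite gt_eqF ?ltr_wpDl ?expR_gt0.
split=> [/eqP|->]; last by rewrite addr0 divff // ln1.
rewrite ln_eq0 ?divr_gt0 ?ltr_wpDl ?expR_gt0 // => /eqP.
move/(congr1 ( *%R^~ (1 + expR u))); rewrite divfK // mul1r.
by move/addrI/expR_inj; lra.
Qed.

Theorem proposition5 (R : realType) (X : finType) (o : X)
  (p : X -> {set X} -> R) (v c : X -> R) (x : X) :
  hf_logit_rep o p v c -> x != o ->
  (ln (p x [set x; o] / p o [set x; o]) = v x <-> c x = 0).
Proof.
move=> [vo co _ rep] xo.
rewrite (stationary_set2_odds vo co xo (rep _ (choice_set2 o x))).
rewrite lnM ?posrE ?expR_gt0 ?divr_gt0 ?ltr_wpDl ?expR_gt0 // expRK.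
rewrite -(ln_habit_correction_eq0 (v x)).
by split=> [/(canRL (addKr (v x)))|->]; rewrite ?addNr ?addr0.
Qed.
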